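(* For $i\in\{1,\dots,m\}$ let $f_i:\mathbb{R}^n\to\mathbb{R}\cup\{\infty\}$ be proper, lower semicontinuous, convex, and bounded below. Let $r>0$, let $\delta:\Lambda\to\mathbb{R}$ be continuous with $\delta(e_i)=0$ for each canonical unit vector $e_i$ and $\delta(\lambda)>0$ otherwise, and let $PA_r(x,\lambda):=-e_{r+\delta(\lambda)}\big(-\sum_{i=1}^m\lambda_ie_rf_i\big)(x)$. Then for every $\lambda\in\Lambda$, $$\operatorname{argmin}_xPA_r(x,\lambda)=\operatorname{argmin}_x\sum_{i=1}^m\lambda_ie_rf_i(x)=\operatorname{argmin}_x\Big(-e_r\Big(-\sum_{i=1}^m\lambda_ie_rf_i\Big)(x)\Big).$$
   Context: $\Lambda=\{\lambda\in\mathbb{R}^m:\lambda_i\ge0,\ \sum_i\lambda_i=1\}$. Moreau envelope $e_rf(x)=\inf_y\{f(y)+\frac r2|y-x|^2\}$. *)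

From HB Require Import structures.
From mathcomp Require Import all_boot all_order all_algebra.
From mathcomp Require Import all_classical all_reals all_analysis.
Set Implicit Arguments. Unset Strict Implicit. Unset Printing Implicit Defensive.
Import Order.TTheory GRing.Theory Num.Theory.
Import numFieldNormedType.Exports.
Local Open Scope classical_set_scope.
Local Open Scope ring_scope.

(* Points of R^n are row vectors 'rV[R]_n (product topology = Euclidean topology).
   Squared Euclidean distance |y - x|^2. *)
Definition sqdist (R : realType) (n : nat) (y x : 'rV[R]_n) : R :=
  \sum_(j < n) (y ord0 j - x ord0 j) ^+ 2.

Definition simplex (R : realType) (m : nat) : set 'rV[R]_m :=
  [set l | (forall i, 0 <= l ord0 i) /\ \sum_(i < m) l ord0 i = 1].

Definition unitvec (R : realType) (m : nat) (i : 'I_m) : 'rV[R]_m :=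
  delta_mx ord0 i.

Local Open Scope ereal_scope.

Definition moreau (R : realType) (n : nat) (r : R) (f : 'rV[R]_n -> \bar R)
    (x : 'rV[R]_n) : \bar R :=
  ereal_inf [set f y + ((r / 2) * sqdist y x)%:E | y in [set: 'rV[R]_n]].

Definition argmin (R : realType) (n : nat) (F : 'rV[R]_n -> \bar R) : set 'rV[R]_n :=
  [set x | forall y, F x <= F y].

Definition proper_fun (R : realType) (n : nat) (f : 'rV[R]_n -> \bar R) : Prop :=
  (forall x, f x != -oo) /\ (exists x, f x < +oo).

(* convexity of an extended-real valued function (0 * +oo = 0 convention). *)
Definition convex_efun (R : realType) (n : nat) (f : 'rV[R]_n -> \bar R) : Prop :=
  forall (x y : 'rV[R]_n) (t : R), (0 <= t)%R -> (t <= 1)%R ->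
    f ((t *: x + (1 - t) *: y)%R) <= t%:E * f x + (1 - t)%:E * f y.

Definition bounded_below_efun (R : realType) (n : nat) (f : 'rV[R]_n -> \bar R) : Prop :=
  exists M : R, forall x, M%:E <= f x.

Definition wsum_env (R : realType) (m n : nat) (r : R) (f : 'I_m -> 'rV[R]_n -> \bar R)
    (l : 'rV[R]_m) (x : 'rV[R]_n) : \bar R :=
  \sum_(i < m) (l ord0 i)%:E * moreau r (f i) x.

Definition PA (R : realType) (m n : nat) (r : R) (delta : 'rV[R]_m -> R)
    (f : 'I_m -> 'rV[R]_n -> \bar R) (x : 'rV[R]_n) (l : 'rV[R]_m) : \bar R :=
  - moreau (r + delta l)%R (fun y => - wsum_env r f l y) x.

From mathcomp Require Import all_boot all_order all_algebra.
From mathcomp Require Import all_classical all_reals all_analysis.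
From mathcomp Require Import ring lra.
Set Implicit Arguments. Unset Strict Implicit.
Import Order.TTheory GRing.Theory Num.Theory.
Import numFieldNormedType.Exports.
Local Open Scope classical_set_scope.
Local Open Scope ring_scope.

(* Write G := sum_i l_i e_r f_i. Each e_r f_i, hence their convex combination G,
   is [quad_majorized]: around any w, G lies up to e below
   z |-> G w + r/2 (|b - z|^2 - |b - w|^2), the centre b being an approximate
   proximal point of w (resp. the convex combination of those).  Two
   consequences hold for every s >= r: at a minimiser x of G one has
   G z <= G x + r/2 |z - x|^2, so -e_s(-G) agrees with G at x; and -e_s(-G) >= G
   everywhere while -e_s(-G)(b) <= G w + e for a suitable b.  Hence -e_s(-G) and
   G have the same minimisers; take s = r + delta(l) and s = r. *)

Section SquaredDistance.
Variables (R : realType) (n : nat).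
Implicit Types (b x y z w : 'rV[R]_n).

Lemma sqdist_ge0 y x : 0 <= sqdist y x.
Proof. by apply: sumr_ge0 => j _; exact: sqr_ge0. Qed.

Lemma sqdistxx x : sqdist x x = 0.
Proof. by rewrite /sqdist big1 // => j _; rewrite subrr expr0n. Qed.

Lemma sqdistC y x : sqdist y x = sqdist x y.
Proof. by apply: eq_bigr => j _; rewrite -sqrrN opprB. Qed.

Lemma sqdist_convex_subr m (l : 'rV[R]_m) (Y : 'I_m -> 'rV[R]_n) z w :
  \sum_(i < m) l ord0 i = 1 ->
  \sum_(i < m) l ord0 i * (sqdist (Y i) z - sqdist (Y i) w) =
  sqdist (\sum_(i < m) l ord0 i *: Y i) z - sqdist (\sum_(i < m) l ord0 i *: Y i) w.
Proof.
have affine a : sqdist a z - sqdist a w =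
    \sum_(j < n) (z ord0 j ^+ 2 - w ord0 j ^+ 2 - 2 * a ord0 j * (z ord0 j - w ord0 j)).
  by rewrite /sqdist -sumrB; apply: eq_bigr => j _; ring.
move=> l1; rewrite affine; under eq_bigr do rewrite affine mulr_sumr.
rewrite exchange_big /=; apply: eq_bigr => j _.
rewrite summxE; under [in RHS]eq_bigr do rewrite mxE.
set c := z ord0 j ^+ 2 - w ord0 j ^+ 2.
rewrite -[c in RHS]mulr1 -l1 !mulr_sumr mulr_suml -sumrB.
by apply: eq_bigr => i _; ring.
Qed.

Lemma sqdist_subr_le b z x (h : R) : 0 < h ->
  sqdist b z - sqdist b x <= (1 + h) * sqdist z x + sqdist b x / h.
Proof.
move=> h0; rewrite /sqdist -sumrB mulr_sumr mulr_suml -big_split /=.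
apply: ler_sum => j _.
set u := x ord0 j - z ord0 j; set v := b ord0 j - x ord0 j.
have young : 2 * u * v <= h * u ^+ 2 + v ^+ 2 / h.
  rewrite -subr_ge0 -(pmulr_rge0 _ h0).
  have -> : h * (h * u ^+ 2 + v ^+ 2 / h - 2 * u * v) = (h * u - v) ^+ 2.
    by field; rewrite gt_eqF.
  exact: sqr_ge0.
have -> : b ord0 j - z ord0 j = u + v by rewrite /u /v; ring.
have -> : z ord0 j - x ord0 j = - u by rewrite /u; ring.
rewrite sqrrN; lra.
Qed.

End SquaredDistance.

Section MoreauEnvelope.
Variables (R : realType) (n : nat) (f : 'rV[R]_n -> \bar R).

Lemma moreau_le (r : R) y x : (moreau r f x <= f y + (r / 2 * sqdist y x)%:E)%E.
Proof. by apply: ereal_inf_lbound; exists y. Qed.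

Lemma moreau_le_fun (r : R) x : (moreau r f x <= f x)%E.
Proof. by have := moreau_le r x x; rewrite sqdistxx mulr0 adde0. Qed.

Lemma le_moreau (r s : R) x : r <= s -> (moreau r f x <= moreau s f x)%E.
Proof.
move=> rs; apply: le_ereal_inf_tmp => _ [y _ <-].
apply: (le_trans (moreau_le r y x)); apply: leeD => //; rewrite lee_fin.
by rewrite ler_wpM2r ?sqdist_ge0 // ler_pM2r.
Qed.

Variable r : R.
Hypotheses (r0 : 0 < r) (fP : proper_fun f) (fB : bounded_below_efun f).

Lemma fin_num_moreau x : moreau r f x \is a fin_num.
Proof.
have [_ [x0 fx0]] := fP; have [M fM] := fB; apply/fin_numP; split.
- rewrite -ltNye; apply: (lt_le_trans (ltNyr M)).
  apply: le_ereal_inf_tmp => _ [y _ <-].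
  rewrite -[M%:E]adde0; apply: leeD => //; rewrite lee_fin.
  by apply: mulr_ge0; [rewrite divr_ge0 // ltW | exact: sqdist_ge0].
- rewrite -ltey; apply: le_lt_trans (moreau_le r x0 x) _.
  by apply: lte_add_pinfty => //; exact: ltry.
Qed.

Lemma moreau_approx_prox x (e : R) : 0 < e -> exists y, f y \is a fin_num /\
  fine (f y) + r / 2 * sqdist y x <= fine (moreau r f x) + e.
Proof.
move=> e0; have fin := fin_num_moreau x.
have [_ [y _ <-]] := lb_ereal_inf_adherent e0 fin.
rewrite -/(moreau r f x) -(fineK fin) -EFinD => lt_y.
have fy : f y \is a fin_num.
  apply/fin_numP; split; first by case: fP.
  by apply/eqP => fyoo; move: lt_y; rewrite fyoo /= ltNge leey.
exists y; split => //.
by move: lt_y; rewrite -(fineK fy) -EFinD lte_fin => /ltW.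
Qed.

End MoreauEnvelope.

(* An approximate form of the concavity of [G - r/2 |.|^2]: up to [e], [G] lies
   below a translate of [r/2 |b - .|^2] that agrees with [G] at [w]. *)
Definition quad_majorized (R : realType) (n : nat) (r : R) (G : 'rV[R]_n -> R) :=
  forall w (e : R), 0 < e -> exists b, forall z,
    G z <= G w + e + r / 2 * (sqdist b z - sqdist b w).

Lemma quad_majorized_moreau (R : realType) n (r : R) (f : 'rV[R]_n -> \bar R) :
  0 < r -> proper_fun f -> bounded_below_efun f ->
  quad_majorized r (fun x => fine (moreau r f x)).
Proof.
move=> r0 fP fB w e e0; have [y [fy le_y]] := moreau_approx_prox r0 fP fB w e0.
exists y => z; suff: fine (moreau r f z) <= fine (f y) + r / 2 * sqdist y z by lra.
have := moreau_le f r y z.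
by rewrite -(fineK fy) -EFinD -(fineK (fin_num_moreau r0 fP fB z)) lee_fin.
Qed.

Lemma quad_majorized_convex (R : realType) m n (r : R) (l : 'rV[R]_m)
    (G : 'I_m -> 'rV[R]_n -> R) :
  (forall i, 0 <= l ord0 i) -> \sum_(i < m) l ord0 i = 1 ->
  (forall i, quad_majorized r (G i)) ->
  quad_majorized r (fun x => \sum_(i < m) l ord0 i * G i x).
Proof.
move=> l0 l1 GQ w e e0.
have [b Hb] := choice (fun i => GQ i w e e0).
exists (\sum_(i < m) l ord0 i *: b i) => z.
have -> : e = \sum_(i < m) l ord0 i * e by rewrite -mulr_suml l1 mul1r.
rewrite -sqdist_convex_subr // mulr_sumr -!big_split /=.
apply: ler_sum => i _; rewrite mulrCA -!mulrDr; exact/ler_wpM2l/Hb.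
Qed.

Section QuadMajorized.
Variables (R : realType) (n : nat) (r : R) (G : 'rV[R]_n -> R).
Hypotheses (r0 : 0 < r) (GQ : quad_majorized r G).

Lemma argmin_quad_majorized_scaled x z (h : R) : (forall y, G x <= G y) -> 0 < h ->
  G z <= G x + r / 2 * ((1 + h) * sqdist z x).
Proof.
move=> xmin h0; apply/ler_addgt0Pr => e e0.
pose eps := e * h / (h + 1).
have eps0 : 0 < eps by apply: divr_gt0; [exact: mulr_gt0 | lra].
have [b Hb] := GQ x eps0.
(* Minimality of [x] forces the centre [b] to be close to [x]. *)
have bx : r / 2 * sqdist b x <= eps.
  by have := Hb b; have := xmin b; rewrite sqdistxx; lra.
have r2 : 0 <= r / 2 by rewrite divr_ge0 // ltW.
have le_d := ler_wpM2l r2 (sqdist_subr_le b z x h0); rewrite mulrDr in le_d.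
have le_z := Hb z.
have bx_h : r / 2 * (sqdist b x / h) <= eps / h by rewrite mulrA ler_pM2r ?invr_gt0.
have eps_e : eps + eps / h = e by rewrite /eps; field; rewrite !gt_eqF //; lra.
lra.
Qed.

Lemma argmin_quad_majorized x z : (forall y, G x <= G y) ->
  G z <= G x + r / 2 * sqdist z x.
Proof.
move=> xmin; have D0 := sqdist_ge0 z x.
have [D00 | Dpos] := eqVneq (sqdist z x) 0.
  by have := argmin_quad_majorized_scaled z xmin ltr01; rewrite D00 !mulr0.
have Dp : 0 < r / 2 * sqdist z x by rewrite mulr_gt0 ?divr_gt0 // lt_def Dpos.
apply/ler_addgt0Pr => e e0.
have := argmin_quad_majorized_scaled z xmin (divr_gt0 e0 Dp).
have -> : r / 2 * ((1 + e / (r / 2 * sqdist z x)) * sqdist z x) = r / 2 * sqdist z x + e.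
  by field; rewrite Dpos gt_eqF.
by rewrite addrA.
Qed.

Lemma moreau_neg_approx w (e : R) : 0 < e ->
  exists b, ((- G w - e)%:E <= moreau r (fun y => - (G y)%:E) b)%E.
Proof.
move=> e0; have [b Hb] := GQ w e0; exists b.
apply: le_ereal_inf_tmp => _ [z _ <-]; rewrite -EFinN -EFinD lee_fin sqdistC.
have Dw : 0 <= r / 2 * sqdist b w by rewrite mulr_ge0 ?sqdist_ge0 ?divr_ge0 ?ltW.
by have := Hb z; lra.
Qed.

Lemma moreau_neg_argmin (s : R) x : r <= s -> (forall y, G x <= G y) ->
  ((- G x)%:E <= moreau s (fun y => - (G y)%:E) x)%E.
Proof.
move=> rs xmin; apply: le_ereal_inf_tmp => _ [z _ <-].
rewrite -EFinN -EFinD lee_fin.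
have := argmin_quad_majorized z xmin.
have : r / 2 * sqdist z x <= s / 2 * sqdist z x.
  by rewrite ler_wpM2r ?sqdist_ge0 // ler_pM2r.
lra.
Qed.

Lemma argmin_neg_moreau_neg (s : R) : r <= s ->
  argmin (fun x => - moreau s (fun y => - (G y)%:E) x)%E = argmin (fun x => (G x)%:E).
Proof.
move=> rs; apply/seteqP; split => x xmin y.
- rewrite lee_fin; apply/ler_addgt0Pr => e e0.
  have [b le_b] := moreau_neg_approx y e0.
  have : ((- G y - e)%:E <= (- G x)%:E)%E.
    have xb := xmin b; rewrite leeN2 in xb.
    apply: (le_trans le_b); apply: (le_trans (le_moreau _ _ rs)).
    exact: le_trans xb (moreau_le_fun _ s x).
  rewrite lee_fin; lra.
- have xminR z : G x <= G z by rewrite -lee_fin.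
  rewrite leeN2; apply: (le_trans (moreau_le_fun _ s y)).
  by apply: le_trans (moreau_neg_argmin rs xminR); rewrite lee_fin lerN2.
Qed.

End QuadMajorized.

Lemma wsum_envE (R : realType) m n (r : R) (f : 'I_m -> 'rV[R]_n -> \bar R)
    (l : 'rV[R]_m) :
  0 < r -> (forall i, proper_fun (f i)) -> (forall i, bounded_below_efun (f i)) ->
  wsum_env r f l = fun x => (\sum_(i < m) l ord0 i * fine (moreau r (f i) x))%:E.
Proof.
move=> r0 fP fB; apply/funext => x; rewrite /wsum_env -sumEFin.
by apply: eq_bigr => i _; rewrite EFinM fineK // fin_num_moreau.
Qed.

Theorem mainTheorem6 (R : realType) (m n : nat)
  (f : 'I_m -> 'rV[R]_n -> \bar R) (r : R) (delta : 'rV[R]_m -> R) :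
  (forall i, proper_fun (f i)) ->
  (forall i, lower_semicontinuous (f i)) ->
  (forall i, convex_efun (f i)) ->
  (forall i, bounded_below_efun (f i)) ->
  0 < r ->
  {within @simplex R m, continuous delta} ->
  (forall i, delta (unitvec R i) = 0) ->
  (forall l, l \in @simplex R m -> (forall i, l != unitvec R i) -> 0 < delta l) ->
  forall l, l \in @simplex R m ->
    argmin (fun x => PA r delta f x l) = argmin (wsum_env r f l) /\
    argmin (wsum_env r f l) =
      argmin (fun x => (- moreau r (fun y => - wsum_env r f l y) x)%E).
Proof.
move=> fP _ _ fB r0 _ delta_e delta_gt0 l lS.
have [l0 l1] := set_mem lS.
have delta_ge0 : 0 <= delta l.
  have [[i /eqP ->]|not_e] := pselect (exists i, l == unitvec R i).
    by rewrite delta_e.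
  by apply/ltW/delta_gt0 => // i; apply/eqP => li; apply: not_e; exists i; apply/eqP.
have GQ := quad_majorized_convex l0 l1 (fun i => quad_majorized_moreau r0 (fP i) (fB i)).
rewrite /PA (wsum_envE l r0 fP fB); split.
  by rewrite (argmin_neg_moreau_neg r0 GQ) // lerDl.
by rewrite (argmin_neg_moreau_neg r0 GQ).
Qed.
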